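(* Let $R$ be a schematic semi-graded ring and $J$ a compatible semi-graded ideal of $R$. Then $R/J$ is a schematic semi-graded ring.
   Context: Rings are associative with $1$; modules are left modules. A ring $R$ is semi-graded (SG) if there are additive subgroups $R_n$ ($n\in\mathbb{Z}$) with $R=\bigoplus_n R_n$, $R_mR_n\subseteq\bigoplus_{k\le m+n}R_k$, and $1\in R_0$; positively SG if $R_n=0$ for $n<0$. A submodule $N$ of an SG module $M=\bigoplus M_n$ is an SG submodule if $N=\bigoplus_n(N\cap M_n)$. An SG ideal is a two-sided ideal $J$ that is an SG submodule of $R$; then $R/J$ is SG with $(R/J)_n=(R_n+J)/J$. Let $R'_n=\{r\in R_n: rh\in R_{n+m}\ \forall m,\forall h\in R_m\}$, $R''_n=\{r\in R'_n: hr\in R_{n+m}\ \forall m,\forall h\in R_m\}$, $R'=\bigcup R'_n$, $R''=\bigcup R''_n$ (and similarly $(R/J)'$ for $R/J$). $J$ is compatible if the image of $R'$ in $R/J$ equals $(R/J)'$. A left Ore set $S$ is good if $S\subseteq R''$ and for $s\in S$, $r\in R'$ there are $u\in R'$, $v\in S$ with $us=vr$. For positively SG $R$, $R_{\ge t}$ is the intersection of all SG ideals containing $\bigoplus_{k\ge t}R_k$. $R$ is schematic if it is positively SG, left Noetherian, and there is a finite set $I$ of good left Ore sets $S$ with $S\cap\bigoplus_{k\ge1}R_k\neq\emptyset$ such that for each $(x_S)_{S\in I}\in\prod_{S\in I}S$ there exist $t,m\in\mathbb{N}$ with $(R_{\ge t})^m\subseteq\sum_{S\in I}Rx_S$. 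*)

From HB Require Import structures.
From mathcomp Require Import all_boot all_order all_algebra.
Set Implicit Arguments. Unset Strict Implicit. Unset Printing Implicit Defensive.
Import Order.TTheory GRing.Theory Num.Theory.
Local Open Scope ring_scope.

Section SG.
Variable R : pzRingType.

Definition grading := int -> R -> Prop.

Definition addsub (P : R -> Prop) : Prop :=
  P 0 /\ forall x y, P x -> P y -> P (x - y).

Definition dsum (G : grading) (P : int -> Prop) (x : R) : Prop :=
  exists (s : seq int) (f : int -> R),
    (forall k, k \in s -> P k /\ G k (f k)) /\ x = \sum_(k <- s) f k.

Definition dsum_indep (G : grading) : Prop :=
  forall (s : seq int) (f : int -> R), uniq s ->
    (forall k, k \in s -> G k (f k)) -> \sum_(k <- s) f k = 0 ->
    forall k, k \in s -> f k = 0.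

Definition semi_graded (G : grading) : Prop :=
  [/\ forall n, addsub (G n),
      (forall x, dsum G (fun _ => True) x),
      dsum_indep G,
      (forall (m n : int) x y, G m x -> G n y -> dsum G (fun k => k <= m + n) (x * y))
    & G 0 1].

Definition pos_semi_graded (G : grading) : Prop :=
  semi_graded G /\ forall (n : int) x, n < 0 -> G n x -> x = 0.

Definition left_ideal (I : R -> Prop) : Prop :=
  addsub I /\ forall r x, I x -> I (r * x).

Definition two_sided_ideal (I : R -> Prop) : Prop :=
  left_ideal I /\ forall r x, I x -> I (x * r).

Definition SG_submodule (G : grading) (N : R -> Prop) : Prop :=
  forall x, N x -> exists (s : seq int) (f : int -> R),
    (forall k, k \in s -> G k (f k) /\ N (f k)) /\ x = \sum_(k <- s) f k.

Definition SG_ideal (G : grading) (J : R -> Prop) : Prop :=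
  two_sided_ideal J /\ SG_submodule G J.

Definition primeN (G : grading) (n : int) (r : R) : Prop :=
  G n r /\ forall (m : int) h, G m h -> G (n + m) (r * h).
Definition prime2N (G : grading) (n : int) (r : R) : Prop :=
  primeN G n r /\ forall (m : int) h, G m h -> G (n + m) (h * r).
Definition primeR (G : grading) (r : R) : Prop := exists n, primeN G n r.
Definition prime2R (G : grading) (r : R) : Prop := exists n, prime2N G n r.

Definition left_Ore (S : R -> Prop) : Prop :=
  [/\ S 1, (forall s t, S s -> S t -> S (s * t))
    & forall s r, S s -> exists u v, S u /\ u * r = v * s].

Definition good_Ore (G : grading) (S : R -> Prop) : Prop :=
  [/\ left_Ore S, (forall s, S s -> prime2R G s)
    & forall s r, S s -> primeR G r ->
        exists u v, primeR G u /\ S v /\ u * s = v * r].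

Definition left_noetherian : Prop :=
  forall I : nat -> R -> Prop, (forall n, left_ideal (I n)) ->
    (forall n x, I n x -> I n.+1 x) ->
    exists N, forall n x, (N <= n)%N -> I n x -> I N x.

Definition Rge (G : grading) (t : nat) (x : R) : Prop :=
  forall J, SG_ideal G J -> (forall y, dsum G (fun k => (t%:Z <= k)) y -> J y) -> J x.

Definition ideal_pow (I : R -> Prop) (m : nat) (x : R) : Prop :=
  exists (k : nat) (a : 'I_k -> 'I_m -> R),
    (forall i j, I (a i j)) /\ x = \sum_(i < k) \prod_(j < m) a i j.

Definition schematic (G : grading) : Prop :=
  [/\ pos_semi_graded G, left_noetherian &
    exists (n : nat) (S : 'I_n -> R -> Prop),
      [/\ forall i, good_Ore G (S i),
          (forall i, exists x, S i x /\ dsum G (fun k => 1 <= k) x)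
        & forall x : 'I_n -> R, (forall i, S i (x i)) ->
            exists t m : nat, forall y, ideal_pow (Rge G t) m y ->
              exists r : 'I_n -> R, y = \sum_(i < n) r i * x i]].

End SG.

(* Quotient R/J presented by a surjective ring morphism pi : R -> Q with kernel J;
   its grading is (R/J)_n = pi(R_n). *)
Definition image_grading (R Q : pzRingType) (pi : R -> Q) (G : grading R) : grading Q :=
  fun n y => exists x, G n x /\ pi x = y.

Definition compatible (R Q : pzRingType) (pi : R -> Q) (G : grading R) : Prop :=
  forall y, primeR (image_grading pi G) y <-> exists x, primeR G x /\ pi x = y.

(** The projection [pi : R -> R/J] transports every ingredient of schematicity.
    Gradings, Ore sets and the covering relations are pushed forward, while
    ascending chains of left ideals are pulled back.  Two facts need more than
    bookkeeping.  First, because the kernel [J] is an SG submodule, a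
    homogeneous decomposition that [pi] sends to zero has all its components in
    [J]; this makes the image grading direct.  Second, [pi (R_{>=t})] is an SG
    ideal of [R/J] that contains the generators of [(R/J)_{>=t}], so it
    contains [(R/J)_{>=t}].  Hence every element of [((R/J)_{>=t})^m] lifts to
    [(R_{>=t})^m], where the covering property of [R] applies. *)

From HB Require Import structures.
From mathcomp Require Import all_boot all_order all_algebra.
From Stdlib Require Import IndefiniteDescription.
Import GRing.Theory.
Set Implicit Arguments. Unset Strict Implicit.
Local Open Scope ring_scope.

Definition image_set (A B : Type) (f : A -> B) (P : A -> Prop) (y : B) : Prop :=
  exists x, P x /\ f x = y.

Lemma sum_over_fibers (I : eqType) (V : nmodType) (s u : seq I) (g : I -> V) :
  uniq u -> {subset s <= u} ->
  \sum_(k <- u) \sum_(l <- s | l == k) g l = \sum_(l <- s) g l.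
Proof.
move=> uniq_u sub_su.
under eq_bigr do rewrite big_mkcond.
rewrite exchange_big /=; apply: eq_big_seq => l ls.
rewrite (big_rem l (sub_su l ls)) /= eqxx big1_seq ?addr0 // => k /andP[_].
by case: eqP => [<-|//]; rewrite mem_rem_uniqF.
Qed.

Lemma ideal_pow_mono (R : pzRingType) (P P' : R -> Prop) m x :
  (forall y, P y -> P' y) -> ideal_pow P m x -> ideal_pow P' m x.
Proof. by move=> sub_PP' [k [a [Pa ->]]]; exists k, a; split=> // i j; apply: sub_PP'. Qed.

Section AdditiveSubgroup.
Variables (R : pzRingType) (P : R -> Prop).
Hypothesis P_addsub : addsub P.

Lemma addsub0 : P 0.
Proof. by case: P_addsub. Qed.

Lemma addsubN x : P x -> P (- x).
Proof. by case: P_addsub => P0 PB Px; rewrite -sub0r; apply: PB. Qed.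

Lemma addsubD x y : P x -> P y -> P (x + y).
Proof. by case: P_addsub => _ PB Px /addsubN Pny; rewrite -[y]opprK; apply: PB. Qed.

Lemma addsub_sum (I : eqType) (s : seq I) (C : pred I) (F : I -> R) :
  (forall i, i \in s -> C i -> P (F i)) -> P (\sum_(i <- s | C i) F i).
Proof.
move=> PF; rewrite big_seq_cond; apply: big_ind => //.
- exact: addsub0.
- exact: addsubD.
- by move=> i /andP[]; apply: PF.
Qed.

End AdditiveSubgroup.

Section SemiGraded.
Variables (R : pzRingType) (G : grading R).
Hypothesis G_sg : semi_graded G.

Lemma uniq_homogeneous_decomposition x : exists (s : seq int) (f : int -> R),
  [/\ uniq s, forall k, k \in s -> G k (f k) & x = \sum_(k <- s) f k].
Proof.
case: G_sg => G_add G_dsum _ _ _; have [s [f [hf ->]]] := G_dsum x.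
exists (undup s), (fun k => \sum_(l <- s | l == k) f l); split.
- exact: undup_uniq.
- move=> k _; apply: addsub_sum => // l ls /eqP <-; exact: (hf l ls).2.
- by rewrite sum_over_fibers ?undup_uniq // => l; rewrite mem_undup.
Qed.

(** [N] supplies a second homogeneous decomposition of the sum, with components
    in [N]; directness of the grading forces it to agree with [f] degreewise. *)
Lemma SG_submodule_components (N : R -> Prop) (s : seq int) (f : int -> R) :
  addsub N -> SG_submodule G N -> uniq s -> (forall k, k \in s -> G k (f k)) ->
  N (\sum_(k <- s) f k) -> forall k, k \in s -> N (f k).
Proof.
case: G_sg => G_add _ G_indep _ _ N_add N_sub uniq_s Gf /N_sub [s' [g [Ng sum_g]]].
pose u := undup (s ++ s').
pose h k := (if k \in s then f k else 0) - \sum_(l <- s' | l == k) g l.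
have Gh k : G k (h k).
  apply: (G_add k).2; first by case: ifP => ks; [apply: Gf | apply: addsub0].
  by apply: addsub_sum => // l ls' /eqP <-; apply: (Ng l ls').1.
have sum_h : \sum_(k <- u) h k = 0.
  rewrite /h sumrB sum_over_fibers ?undup_uniq //; last first.
    by move=> l ls'; rewrite mem_undup mem_cat ls' orbT.
  rewrite -big_mkcond -big_filter.
  have u_s : perm_eq [seq k <- u | k \in s] s.
    apply: uniq_perm; [exact/filter_uniq/undup_uniq | exact: uniq_s |].
    by move=> k; rewrite mem_filter mem_undup mem_cat; case: (k \in s).
  by rewrite (perm_big _ u_s) -sum_g subrr.
move=> k ks; have /eqP : h k = 0.
  by apply: (G_indep u h (undup_uniq _) (fun l _ => Gh l) sum_h); rewrite mem_undup mem_cat ks.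
rewrite /h ks subr_eq0 => /eqP ->.
by apply: addsub_sum => // l ls' _; apply: (Ng l ls').2.
Qed.

Lemma Rge_two_sided_ideal t : two_sided_ideal (Rge G t).
Proof.
split; first split; first split.
- by move=> J [[[[J0 _] _] _] _].
- move=> x y Rx Ry J hJ gen; case: (hJ) => [[[[_ JB] _] _] _].
  by apply: JB; [apply: Rx | apply: Ry].
- by move=> r x Rx J hJ gen; case: (hJ) => [[[_ JL] _] _]; apply: JL; apply: Rx.
- by move=> r x Rx J hJ gen; case: (hJ) => [[_ JR] _]; apply: JR; apply: Rx.
Qed.

Lemma Rge_SG_ideal t : SG_ideal G (Rge G t).
Proof.
split; first exact: Rge_two_sided_ideal.
move=> x Rx; have [s [f [uniq_s Gf x_sum]]] := uniq_homogeneous_decomposition x.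
rewrite x_sum in Rx *.
exists s, f; split=> // k ks; split; first exact: Gf.
move=> J hJ gen; have [[[J_add _] _] J_sub] := hJ.
by apply: (SG_submodule_components J_add J_sub uniq_s Gf _ ks); apply: Rx.
Qed.

End SemiGraded.

Section Image.
Variables (R Q : pzRingType) (pi : {rmorphism R -> Q}) (G : grading R).
Hypothesis pi_surj : forall y, exists x, pi x = y.
Local Notation G' := (image_grading pi G).

Lemma addsub_image P : addsub P -> addsub (image_set pi P).
Proof.
case=> P0 PB; split; first by exists 0; rewrite rmorph0.
by move=> _ _ [x [Px <-]] [y [Py <-]]; exists (x - y); rewrite rmorphB; split=> //; apply: PB.
Qed.

Lemma two_sided_ideal_image I : two_sided_ideal I -> two_sided_ideal (image_set pi I).
Proof.
case=> [[I_add IL] IR]; split; first split; first exact: addsub_image.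
- move=> r _ [x [Ix <-]]; have [r' <-] := pi_surj r.
  by exists (r' * x); rewrite rmorphM; split=> //; apply: IL.
- move=> r _ [x [Ix <-]]; have [r' <-] := pi_surj r.
  by exists (x * r'); rewrite rmorphM; split=> //; apply: IR.
Qed.

Lemma left_ideal_preimage I : left_ideal I -> left_ideal (fun x => I (pi x)).
Proof.
case=> [[I0 IB] IL]; split; first split.
- by rewrite rmorph0.
- by move=> x y; rewrite rmorphB; apply: IB.
- by move=> r x; rewrite rmorphM; apply: IL.
Qed.

Lemma image_lift (s : seq int) (f : int -> Q) :
  (forall k, k \in s -> G' k (f k)) ->
  exists g : int -> R, forall k, k \in s -> G k (g k) /\ pi (g k) = f k.
Proof.
move=> G'f; apply: (functional_choice (fun k x => k \in s -> G k x /\ pi x = f k)) => k.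
case: (boolP (k \in s)) => [/G'f [x Gx] | ks]; first by exists x.
by exists 0 => /negP.
Qed.

Lemma dsum_image P x : dsum G P x -> dsum G' P (pi x).
Proof.
case=> [s [f [Gf ->]]]; exists s, (fun k => pi (f k)); split; last exact: rmorph_sum.
by move=> k /Gf [Pk Gk]; split=> //; exists (f k).
Qed.

Lemma dsum_image_lift P y : dsum G' P y -> image_set pi (dsum G P) y.
Proof.
case=> [s [f [G'f ->]]]; have [g Gg] := image_lift (fun k ks => (G'f k ks).2).
exists (\sum_(k <- s) g k); split.
  by exists s, g; split=> // k ks; split; [apply: (G'f k ks).1 | apply: (Gg k ks).1].
by rewrite rmorph_sum; apply: eq_big_seq => k /Gg [].
Qed.

Lemma SG_submodule_image N : SG_submodule G N -> SG_submodule G' (image_set pi N).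
Proof.
move=> N_sub _ [x [/N_sub [s [f [GNf ->]]] <-]].
exists s, (fun k => pi (f k)); split; last exact: rmorph_sum.
by move=> k /GNf [Gk Nk]; split; exists (f k).
Qed.

Lemma SG_ideal_image I : SG_ideal G I -> SG_ideal G' (image_set pi I).
Proof.
by case=> I_ideal I_sub; split; [apply: two_sided_ideal_image | apply: SG_submodule_image].
Qed.

Lemma primeR_image r : primeR G r -> primeR G' (pi r).
Proof.
case=> n [Gr G_mulr]; exists n; split; first by exists r.
by move=> m _ [h [Gh <-]]; exists (r * h); rewrite rmorphM; split=> //; apply: G_mulr.
Qed.

Lemma prime2R_image r : prime2R G r -> prime2R G' (pi r).
Proof.
case=> n [[Gr G_mulr] G_mull]; exists n; split; first split; first by exists r.
- by move=> m _ [h [Gh <-]]; exists (r * h); rewrite rmorphM; split=> //; apply: G_mulr.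
- by move=> m _ [h [Gh <-]]; exists (h * r); rewrite rmorphM; split=> //; apply: G_mull.
Qed.

Lemma semi_graded_image :
  semi_graded G -> SG_submodule G (fun x => pi x = 0) -> semi_graded G'.
Proof.
move=> G_sg ker_sub; case: (G_sg) => G_add G_dsum _ G_mul G1; split.
- by move=> n; apply: addsub_image.
- by move=> y; have [x <-] := pi_surj y; apply: dsum_image.
- move=> s f uniq_s G'f sum_f k ks; have [g Gg] := image_lift G'f.
  have addsub_ker : addsub (fun x => pi x = 0).
    by split=> [|x y x0 y0]; rewrite ?rmorph0 ?rmorphB ?x0 ?y0 ?subrr.
  have ker_sum : pi (\sum_(l <- s) g l) = 0.
    by rewrite rmorph_sum -[RHS]sum_f; apply: eq_big_seq => l /Gg [].
  have := SG_submodule_components G_sg addsub_ker ker_sub uniq_s _ ker_sum ks.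
  by rewrite (Gg k ks).2; apply=> l /Gg [].
- by move=> m n _ _ [x [Gx <-]] [y [Gy <-]]; rewrite -rmorphM; apply/dsum_image/G_mul.
- by exists 1; rewrite rmorph1.
Qed.

Lemma pos_semi_graded_image :
  pos_semi_graded G -> SG_submodule G (fun x => pi x = 0) -> pos_semi_graded G'.
Proof.
case=> G_sg G_neg ker_sub; split; first exact: semi_graded_image.
by move=> n _ n_neg [x [Gx <-]]; rewrite (G_neg n x n_neg Gx) rmorph0.
Qed.

Lemma left_noetherian_image : left_noetherian R -> left_noetherian Q.
Proof.
move=> R_noeth I I_ideal I_incr.
have [N stable] := R_noeth (fun n x => I n (pi x))
  (fun n => left_ideal_preimage (I_ideal n)) (fun n x => I_incr n (pi x)).
by exists N => n y nN; have [x <-] := pi_surj y; apply: stable.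
Qed.

Lemma left_Ore_image S : left_Ore S -> left_Ore (image_set pi S).
Proof.
case=> S1 SM S_ore; split.
- by exists 1; rewrite rmorph1.
- by move=> _ _ [s [Ss <-]] [t [St <-]]; exists (s * t); rewrite rmorphM; split=> //; apply: SM.
- move=> _ r [s [Ss <-]]; have [r' <-] := pi_surj r.
  have [u [v [Su uv]]] := S_ore s r' Ss.
  by exists (pi u), (pi v); split; [exists u | rewrite -!rmorphM uv].
Qed.

Lemma good_Ore_image S : compatible pi G -> good_Ore G S -> good_Ore G' (image_set pi S).
Proof.
move=> G_compat [S_ore S_prime2 S_good]; split.
- exact: left_Ore_image.
- by move=> _ [s [/S_prime2 s_prime2 <-]]; apply: prime2R_image.
- move=> _ r [s [Ss <-]] /G_compat [r' [r'_prime <-]].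
  have [u [v [u_prime [Sv uv]]]] := S_good s r' Ss r'_prime.
  exists (pi u), (pi v); split; first exact: primeR_image.
  by split; [exists v | rewrite -!rmorphM uv].
Qed.

Lemma Rge_image t y : semi_graded G -> Rge G' t y -> image_set pi (Rge G t) y.
Proof.
move=> G_sg; apply; first exact/SG_ideal_image/Rge_SG_ideal.
move=> _ /dsum_image_lift [x [x_dsum <-]]; exists x; split=> //.
by move=> J _; apply.
Qed.

Lemma ideal_pow_image P m y :
  ideal_pow (image_set pi P) m y -> image_set pi (ideal_pow P m) y.
Proof.
case=> k [a [Pa ->]].
have [b Pb] := functional_choice _ (fun i => functional_choice _ (Pa i)).
exists (\sum_(i < k) \prod_(j < m) b i j); split.
  by exists k, b; split=> // i j; case: (Pb i j).
rewrite rmorph_sum; apply: eq_bigr => i _; rewrite rmorph_prod.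
by apply: eq_bigr => j _; case: (Pb i j).
Qed.

Lemma Rge_pow_cover_image n (x' : 'I_n -> R) (x : 'I_n -> Q) t m :
  semi_graded G -> (forall i, pi (x' i) = x i) ->
  (forall z, ideal_pow (Rge G t) m z -> exists r, z = \sum_(i < n) r i * x' i) ->
  forall y, ideal_pow (Rge G' t) m y -> exists r, y = \sum_(i < n) r i * x i.
Proof.
move=> G_sg pi_x' cover y /(ideal_pow_mono (fun q => Rge_image G_sg)).
move=> /ideal_pow_image [z [/cover [r ->] <-]].
exists (fun i => pi (r i)); rewrite rmorph_sum; apply: eq_bigr => i _.
by rewrite rmorphM pi_x'.
Qed.

End Image.

Theorem mainTheorem9 (R Q : pzRingType) (G : grading R) (J : R -> Prop)
    (pi : {rmorphism R -> Q}) :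
  schematic G -> SG_ideal G J ->
  (forall x, J x <-> pi x = 0) -> (forall y, exists x, pi x = y) ->
  compatible pi G ->
  schematic (image_grading pi G).
Proof.
move=> [G_pos R_noeth [n [S [S_good S_pos S_cover]]]] [_ J_sub] J_ker pi_surj G_compat.
have ker_sub : SG_submodule G (fun x => pi x = 0).
  move=> x /J_ker /J_sub [s [f [GJf ->]]]; exists s, f.
  by split=> // k /GJf [Gk /J_ker fk0]; split.
split.
- exact: pos_semi_graded_image.
- exact: left_noetherian_image.
exists n, (fun i => image_set pi (S i)); split.
- by move=> i; apply: good_Ore_image.
- move=> i; have [x [Sx x_pos]] := S_pos i.
  by exists (pi x); split; [exists x | apply: dsum_image].
- move=> x /(functional_choice (fun i x' => S i x' /\ pi x' = x i)) [x' Sx'].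
  have [t [m cover]] := S_cover x' (fun i => (Sx' i).1).
  exists t, m; exact: (Rge_pow_cover_image pi_surj G_pos.1 (fun i => (Sx' i).2) cover).
Qed.
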